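(* Let $\mathcal{H}$ be a finite-dimensional Hilbert space, $\mathcal{O}\in\mathcal{L}(\mathcal{H})$ Hermitian, and $n\geq 1$. For $1\leq k\leq n$ define \[\mathcal{O}_k=\frac{1}{n!}\sum_{\pi\in\mathfrak{S}_n}U_\pi\,U_{s_k}\,(\mathcal{O}\otimes I^{\otimes n-1})\,U_\pi^\dagger\in\mathcal{L}(\mathcal{H}^{\otimes n}).\] Then for any $1\leq i\leq j\leq n$, $\mathcal{O}_i\mathcal{O}_j=\mathcal{O}_j\mathcal{O}_i$.
   Context: $\mathfrak{S}_n$ is the symmetric group on $\{1,\ldots,n\}$. For $\pi\in\mathfrak{S}_n$, $U_\pi$ is the unitary on $\mathcal{H}^{\otimes n}$ with $U_\pi\ket{\psi_1}\cdots\ket{\psi_n}=\ket{\psi_{\pi^{-1}(1)}}\cdots\ket{\psi_{\pi^{-1}(n)}}$. $s_k\in\mathfrak{S}_n$ is the cyclic shift on the first $k$ elements: $s_k(i)=i+1$ for $i<k$, $s_k(k)=1$, and $s_k(i)=i$ for $k<i\leq n$. *)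

From HB Require Import structures.
From mathcomp Require Import all_boot all_order all_algebra all_fingroup.
From mathcomp Require Import zify.
Set Implicit Arguments. Unset Strict Implicit. Unset Printing Implicit Defensive.
Import Order.TTheory GRing.Theory Num.Theory.
Local Open Scope ring_scope.

(* Hilbert space H = C^d (standard basis 'I_d), scalars C : numClosedFieldType.
   H^{(x)n} has orthonormal basis indexed by T := {ffun 'I_n -> 'I_d}
   (basis vector e_x = e_{x 0} (x) ... (x) e_{x (n-1)}).
   Operators on H^{(x)n} are square matrices indexed by 'I_#|T|, identified with
   T via enum_val / enum_rank. *)

Definition btup (d n : nat) := {ffun 'I_n -> 'I_d}.

Section Ops.
Variables (C : numClosedFieldType) (d n : nat).
Local Notation T := (btup d n).

Definition opmx (f : T -> T -> C) : 'M[C]_#|T| :=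
  \matrix_(a, b) f (enum_val a) (enum_val b).

Definition adjmx m (A : 'M[C]_m) : 'M[C]_m := map_mx Num.conj A^T.

Definition is_hermitian_op m (A : 'M[C]_m) : Prop := adjmx A = A.

Definition tensor (A : 'I_n -> 'M[C]_d) : 'M[C]_#|T| :=
  opmx (fun y x => \prod_(i : 'I_n) A i (y i) (x i)).

Definition first_factor (O : 'M[C]_d) : 'M[C]_#|T| :=
  tensor (fun i => if val i == 0%N then O else 1%:M).

(* U_pi |psi_1 .. psi_n> = |psi_{pi^-1(1)} .. psi_{pi^-1(n)}> ;
   on basis vectors: U_pi e_x = e_{x o pi^-1} *)
Definition Uperm (p : {perm 'I_n}) : 'M[C]_#|T| :=
  opmx (fun y x => (y == [ffun j => x ((p^-1)%g j)])%:R).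
End Ops.

(* cyclic shift s_k on the first k elements; here k is given 0-based as
   kk : 'I_n with k = kk+1 (so 1 <= k <= n):
   i |-> i+1 for i < kk, kk |-> 0, i |-> i for i > kk  (0-based) *)
Definition sk_fun (n : nat) (kk : 'I_n) (i : 'I_n) : 'I_n :=
  insubd i (if (i < kk)%N then i.+1 else if i == kk then 0%N else val i).

Lemma sk_fun_val n (kk i : 'I_n) :
  val (sk_fun kk i) = (if (i < kk)%N then i.+1 else if i == kk then 0%N else val i).
Proof.
rewrite /sk_fun val_insubd; have := ltn_ord kk; have := ltn_ord i.
case: (ltnP i kk) => ik /= hi hk.
  by rewrite ifT //; lia.
case: (i =P kk) => _; rewrite ifT //; lia.
Qed.

Lemma sk_fun_inj n (kk : 'I_n) : injective (sk_fun kk).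
Proof.
move=> i j /(congr1 val); rewrite !sk_fun_val -!(val_eqE _ kk) => h.
apply/val_inj => /=.
have := ltn_ord i; have := ltn_ord j; have := ltn_ord kk.
move: h; case: (ltnP i kk); case: (ltnP j kk);
  case: (val i =P val kk); case: (val j =P val kk); move=> /= *; lia.
Qed.

Definition sk (n : nat) (kk : 'I_n) : {perm 'I_n} := perm (@sk_fun_inj n kk).

Definition Ok (C : numClosedFieldType) (d n : nat) (O : 'M[C]_d) (kk : 'I_n)
  : 'M[C]_#|btup d n| :=
  (n`!%:R)^-1 *: \sum_(p : {perm 'I_n})
     (Uperm C d p *m Uperm C d (sk kk) *m first_factor n O *m adjmx (Uperm C d p)).

(* Write O_s for O_k with s_k replaced by an arbitrary permutation s, and X_m for O acting
   on the m-th tensor factor, so that O (x) I = X_1 and U_g X_m = X_(g m) U_g.  Then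
   U_p U_s X_1 U_p^-1 = U_(p s p^-1) X_(p 1), and a product O_s O_t (up to n!^2) expands
   into terms W(pi, u, v) = U_pi X_u X_v.  The twirl Tw M = sum_g U_g^-1 M U_g of such a
   term only depends on the simultaneous conjugacy class of (pi, u, v), is symmetric in u
   and v, and is unchanged by pi |-> pi^-1, because reflecting every cycle of pi suitably
   gives a rho with pi^rho = pi^-1 that fixes or swaps u and v.  With these moves
   Tw (O_s O_t) = Tw (O_t O_s).  Both products commute with every U_g, so Tw multiplies
   each by n!, and they are equal. *)

From HB Require Import structures.
From mathcomp Require Import all_boot all_order all_algebra all_fingroup.
From mathcomp Require Import zify.
Set Implicit Arguments. Unset Strict Implicit. Unset Printing Implicit Defensive.
Import Order.TTheory GRing.Theory Num.Theory.

Section CycleReflection.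
Variables (T : finType) (f : {perm T}).
Local Notation conn := (fconnect f).
Local Notation len := (fingraph.order f).

Lemma iter_mod_order b i : iter i f b = iter (i %% len b) f b.
Proof.
rewrite {1}(divn_eq i (len b)) addnC iterD; congr (iter _ f _).
by elim: (i %/ len b) => [|q IHq] //; rewrite mulSn iterD IHq (iter_order (@perm_inj _ f)).
Qed.

Lemma eq_iter_mod_order b i j : i = j %[mod len b] -> iter i f b = iter j f b.
Proof. by move=> eij; rewrite iter_mod_order eij -iter_mod_order. Qed.

Lemma findex_iter_mod b i : findex f b (iter i f b) = i %% len b.
Proof. by rewrite iter_mod_order findex_iter // ltn_pmod // fingraph.order_gt0. Qed.

(* The reflection [f^k b |-> f^(s-k) b] of the cycle of [b]; the summand [len b] only
   prevents truncated subtraction. *)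
Definition cycle_reflect (b : T) (s : nat) (x : T) : T :=
  iter (s + len b - findex f b x) f b.

Lemma cycle_reflect_conn b s x : conn b (cycle_reflect b s x).
Proof. exact: fconnect_iter. Qed.

Lemma cycle_reflectK b s x : conn b x -> cycle_reflect b s (cycle_reflect b s x) = x.
Proof.
move=> bx; rewrite {1}/cycle_reflect findex_iter_mod -{2}(iter_findex bx).
apply: eq_iter_mod_order; have := findex_max bx.
set k := findex f b x; set m := s + len b - k => klt.
have := divn_eq m (len b); have := ltn_pmod m (fingraph.order_gt0 f b).
move: (m %/ len b) (m %% len b) => q r rlt mqr.
have -> : s + len b - r = q * len b + k by rewrite /m in mqr; lia.
by rewrite modnMDl.
Qed.

Lemma cycle_reflect_succ b s x :
  conn b x -> f (cycle_reflect b s (f x)) = cycle_reflect b s x.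
Proof.
move=> bx; rewrite /cycle_reflect -iterS; apply: eq_iter_mod_order.
have klt := findex_max bx.
have -> : findex f b (f x) = (findex f b x).+1 %% len b.
  by rewrite -{1}(iter_findex bx) -iterS findex_iter_mod.
move: (findex f b x) klt => k; rewrite leq_eqVlt => /orP[/eqP kL | kL].
  rewrite kL modnn; have -> : (s + len b - 0).+1 = s + len b - k + len b by lia.
  by rewrite modnDr.
by rewrite (modn_small kL); have -> : (s + len b - k.+1).+1 = s + len b - k by lia.
Qed.

Lemma cycle_reflect_base b s : cycle_reflect b s b = iter s f b.
Proof. by rewrite /cycle_reflect findex0 subn0 iter_mod_order modnDr -iter_mod_order. Qed.

Section ReversingConjugator.
Variables (u v : T).

Let conn_sym : connect_sym (frel f) := fconnect_sym (@perm_inj _ f).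

(* The cycle of [u] is reflected so as to fix [u], or to exchange [u] and [v] when [v] lies
   on it; the cycle of [v] is reflected about [v], and any other cycle about its root. *)
Definition rev_base x := if conn u x then u else if conn v x then v else froot f x.
Definition rev_shift x := if conn u x && conn u v then findex f u v else 0.
Definition reverser x := cycle_reflect (rev_base x) (rev_shift x) x.

Lemma rev_base_conn x : conn (rev_base x) x.
Proof.
rewrite /rev_base; case: ifP => // _; case: ifP => // _.
by rewrite conn_sym connect_root.
Qed.

Lemma reverser_conn x y :
  conn x y -> reverser y = cycle_reflect (rev_base x) (rev_shift x) y.
Proof.
move=> xy; rewrite /reverser /rev_base /rev_shift -!(same_connect_r conn_sym xy).
case: ifP => // _; case: ifP => // _.
by congr cycle_reflect; apply/eqP; rewrite (root_connect conn_sym) conn_sym.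
Qed.

Lemma reverserK : involutive reverser.
Proof.
move=> x; have bx := rev_base_conn x.
have xr : conn x (reverser x).
  by apply: connect_trans (cycle_reflect_conn _ _ _); rewrite conn_sym.
by rewrite (reverser_conn xr) cycle_reflectK.
Qed.

Lemma reverser_succ x : f (reverser (f x)) = reverser x.
Proof. by rewrite (reverser_conn (fconnect1 f x)) cycle_reflect_succ // rev_base_conn. Qed.

Lemma reverser_u : reverser u = if conn u v then v else u.
Proof.
rewrite /reverser /rev_base /rev_shift connect0 /= cycle_reflect_base.
by case: ifP => // uv; rewrite iter_findex.
Qed.

Lemma reverser_v : reverser v = if conn u v then u else v.
Proof.
rewrite /reverser /rev_base /rev_shift connect0 /=; case: ifP => uv /=.
  rewrite -[X in cycle_reflect _ _ X](iter_findex uv) -cycle_reflect_base.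
  by rewrite cycle_reflectK ?connect0.
by rewrite cycle_reflect_base.
Qed.

End ReversingConjugator.
End CycleReflection.

Lemma perm_conj_inv_stab_pair (T : finType) (f : {perm T}) (u v : T) :
  exists rho : {perm T}, (f ^ rho = f^-1)%g /\
    ((rho u = u /\ rho v = v) \/ (rho u = v /\ rho v = u)).
Proof.
pose rho := perm (can_inj (reverserK f u v)).
have rhoE x : rho x = reverser f u v x by rewrite permE.
exists rho; split.
  apply/permP => x; rewrite -[x](reverserK f u v) -rhoE permJ.
  by apply: (@perm_inj _ f); rewrite permKV !rhoE reverser_succ.
by rewrite !rhoE reverser_u reverser_v; case: ifP; [right | left].
Qed.

Lemma perm_conj_inv_fix (T : finType) (f : {perm T}) (u : T) :
  exists2 rho : {perm T}, (f ^ rho = f^-1)%g & rho u = u.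
Proof. by have [rho [f_rho [[] | []]]] := perm_conj_inv_stab_pair f u u; exists rho. Qed.

Local Open Scope ring_scope.

Section TensorOperators.
Variables (C : numClosedFieldType) (d n : nat).
Local Notation T := (btup d n).
Local Notation U := (Uperm C d).

Lemma sum_enum_val (F : T -> C) : \sum_(a < #|T|) F (enum_val a) = \sum_x F x.
Proof. by rewrite (reindex _ (onW_bij _ (@enum_val_bij T))). Qed.

Lemma eq_opmx (f g : T -> T -> C) : f =2 g -> opmx f = opmx g.
Proof. by move=> fg; apply/matrixP => a b; rewrite !mxE fg. Qed.

Lemma mul_opmx (f g : T -> T -> C) :
  opmx f *m opmx g = opmx (fun y x => \sum_z f y z * g z x).
Proof.
by apply/matrixP => a b; rewrite !mxE -sum_enum_val; apply: eq_bigr => c _; rewrite !mxE.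
Qed.

Lemma opmx_delta : opmx (fun y x : T => (y == x)%:R : C) = 1%:M.
Proof. by apply/matrixP => a b; rewrite !mxE (inj_eq enum_val_inj). Qed.

Lemma adjmx_opmx (f : T -> T -> C) : adjmx (opmx f) = opmx (fun y x => (f x y)^*).
Proof. by apply/matrixP => a b; rewrite !mxE. Qed.

Lemma sum_delta_mull (w : T) (F : T -> C) : \sum_z (z == w)%:R * F z = F w.
Proof.
by rewrite (bigD1 w) //= eqxx mul1r big1 ?addr0 // => z /negbTE->; rewrite mul0r.
Qed.

Lemma sum_delta_mulr (w : T) (F : T -> C) : \sum_z F z * (z == w)%:R = F w.
Proof. by rewrite -[RHS](sum_delta_mull w); apply: eq_bigr => z _; rewrite mulrC. Qed.

Lemma eq_relabelV (p : {perm 'I_n}) (y x : T) :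
  (y == [ffun j => x ((p^-1)%g j)]) = (x == [ffun j => y (p j)]).
Proof. by apply/eqP/eqP => ->; apply/ffunP => j; rewrite !ffunE ?permK ?permKV. Qed.

Lemma mulmx_Uperm (p q : {perm 'I_n}) : U p *m U q = U (q * p)%g.
Proof.
rewrite mul_opmx; apply: eq_opmx => y x.
under eq_bigr do rewrite eq_relabelV.
rewrite sum_delta_mull !eq_relabelV; congr (_ == _)%:R.
by apply/ffunP => j; rewrite !ffunE permM.
Qed.

Lemma Uperm1 : U (1 : {perm 'I_n})%g = 1%:M.
Proof.
rewrite -opmx_delta; apply: eq_opmx => y x; congr (_ == _)%:R.
by apply/ffunP => j; rewrite ffunE invg1 perm1.
Qed.

Lemma adjmx_Uperm (p : {perm 'I_n}) : adjmx (U p) = U (p^-1)%g.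
Proof.
rewrite adjmx_opmx; apply: eq_opmx => y x; rewrite conjC_nat eq_relabelV.
by congr (_ == _)%:R; apply/ffunP => j; rewrite !ffunE invgK.
Qed.

Lemma mulmx_UpermV (p : {perm 'I_n}) : U p *m U (p^-1)%g = 1%:M.
Proof. by rewrite mulmx_Uperm mulVg Uperm1. Qed.

Definition local_op (O : 'M[C]_d) (m : 'I_n) : 'M[C]_#|T| :=
  tensor (fun i => if i == m then O else 1%:M).

Lemma mulmx_tensor (A B : 'I_n -> 'M[C]_d) :
  tensor A *m tensor B = tensor (fun i => A i *m B i).
Proof.
rewrite mul_opmx; apply: eq_opmx => y x.
under eq_bigr do rewrite -big_split /=.
rewrite -(bigA_distr_bigA (fun i k => A i (y i) k * B i k (x i))).
by apply: eq_bigr => i _; rewrite mxE.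
Qed.

Lemma local_opC (O : 'M[C]_d) m m' :
  local_op O m *m local_op O m' = local_op O m' *m local_op O m.
Proof.
rewrite !mulmx_tensor; apply: eq_opmx => y x; apply: eq_bigr => i _.
by case: (i == m); case: (i == m'); rewrite ?mulmx1 ?mul1mx.
Qed.

Lemma Uperm_local_op (O : 'M[C]_d) (g : {perm 'I_n}) m :
  U g *m local_op O m = local_op O (g m) *m U g.
Proof.
rewrite !mul_opmx; apply: eq_opmx => y x.
under eq_bigr do rewrite eq_relabelV.
rewrite sum_delta_mull sum_delta_mulr [RHS](reindex_inj (@perm_inj _ g)).
by apply: eq_bigr => i _; rewrite !ffunE permK (inj_eq (@perm_inj _ g)).
Qed.

Lemma local_op_Uperm (O : 'M[C]_d) (g : {perm 'I_n}) m :
  local_op O m *m U g = U g *m local_op O ((g^-1)%g m).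
Proof. by rewrite Uperm_local_op permKV. Qed.

Lemma first_factor_local (O : 'M[C]_d) (i0 : 'I_n) :
  val i0 = 0%N -> first_factor n O = local_op O i0.
Proof.
move=> i00; apply: eq_opmx => y x; apply: eq_bigr => i _.
by rewrite -val_eqE /= i00.
Qed.

End TensorOperators.

Section Twirl.
Variables (C : numClosedFieldType) (d n : nat) (O : 'M[C]_d).
Local Notation T := (btup d n).
Local Notation U := (Uperm C d).
Local Notation X := (local_op O).
Local Notation conj g M := (U (g^-1)%g *m M *m U g).

Definition twirl (M : 'M[C]_#|T|) := \sum_(g : {perm 'I_n}) conj g M.

Lemma twirl_conj h M : twirl (conj h M) = twirl M.
Proof.
rewrite /twirl [RHS](reindex_inj (mulIg h)); apply: eq_bigr => g _.
by rewrite !mulmxA mulmx_Uperm -!mulmxA mulmx_Uperm invMg.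
Qed.

Lemma twirl_sum I (r : seq I) (P : pred I) (F : I -> 'M[C]_#|T|) :
  twirl (\sum_(i <- r | P i) F i) = \sum_(i <- r | P i) twirl (F i).
Proof.
rewrite /twirl -exchange_big; apply: eq_bigr => g _.
by rewrite mulmx_sumr mulmx_suml.
Qed.

Lemma twirl_invariant M : (forall g, conj g M = M) -> twirl M = M *+ #|{perm 'I_n}|.
Proof. by move=> Minv; rewrite /twirl (eq_bigr (fun=> M)) ?sumr_const. Qed.

Lemma conj_mulmx g (A B : 'M[C]_#|T|) : conj g (A *m B) = conj g A *m conj g B.
Proof. by rewrite !mulmxA -[_ *m U g *m U _]mulmxA mulmx_UpermV mulmx1. Qed.

Definition perm_pair_op (pi : {perm 'I_n}) u v := U pi *m X u *m X v.

Lemma perm_pair_opC pi u v : perm_pair_op pi u v = perm_pair_op pi v u.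
Proof. by rewrite /perm_pair_op -!mulmxA local_opC. Qed.

Lemma conj_perm_pair_op h pi u v :
  conj h (perm_pair_op pi u v) = perm_pair_op (pi ^ h^-1)%g ((h^-1)%g u) ((h^-1)%g v).
Proof.
rewrite /perm_pair_op -!mulmxA local_op_Uperm [X u *m _]mulmxA local_op_Uperm.
by rewrite !mulmxA !mulmx_Uperm conjgE invgK mulgA.
Qed.

Lemma twirl_perm_pair_conjg h pi u v :
  twirl (perm_pair_op pi u v) = twirl (perm_pair_op (pi ^ h)%g (h u) (h v)).
Proof. by rewrite -[RHS](twirl_conj h) conj_perm_pair_op conjgK !permK. Qed.

Lemma twirl_perm_pair_invg pi u v :
  twirl (perm_pair_op (pi^-1)%g u v) = twirl (perm_pair_op pi u v).
Proof.
have [rho [pi_rho [[ru rv] | [ru rv]]]] := perm_conj_inv_stab_pair pi u v;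
  by rewrite (twirl_perm_pair_conjg rho) conjVg pi_rho invgK ru rv // perm_pair_opC.
Qed.

Definition symmetrized (s : {perm 'I_n}) : 'M[C]_#|T| :=
  \sum_(p : {perm 'I_n}) U p *m U s *m first_factor n O *m adjmx (U p).

Lemma conj_symmetrized g s : conj g (symmetrized s) = symmetrized s.
Proof.
rewrite mulmx_sumr mulmx_suml [RHS](reindex_inj (mulIg (g^-1)%g)).
apply: eq_bigr => p _; rewrite !adjmx_Uperm !mulmxA !mulmx_Uperm -!mulmxA !mulmx_Uperm.
by rewrite invMg invgK.
Qed.

Variable i0 : 'I_n.
Hypothesis first_i0 : first_factor n O = X i0.

Lemma symmetrizedE s : symmetrized s = \sum_p U (s ^ p)%g *m X (p i0).
Proof.
apply: eq_bigr => p _; rewrite first_i0 adjmx_Uperm -!mulmxA local_op_Uperm invgK.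
by rewrite !mulmxA !mulmx_Uperm conjgE mulgA.
Qed.

Lemma mulmx_symmetrized s s' : symmetrized s *m symmetrized s' =
  \sum_p \sum_q perm_pair_op (s' ^ q * s ^ p)%g (((s' ^ q)^-1)%g (p i0)) (q i0).
Proof.
rewrite !symmetrizedE mulmx_suml; apply: eq_bigr => p _; rewrite mulmx_sumr.
apply: eq_bigr => q _; rewrite /perm_pair_op -!mulmxA [X (p i0) *m _]mulmxA.
by rewrite local_op_Uperm !mulmxA mulmx_Uperm.
Qed.

Definition pair_sum s s' := \sum_(p : {perm 'I_n}) \sum_(q : {perm 'I_n})
  twirl (perm_pair_op (s ^ p * s' ^ q)%g (p i0) (q i0)).

Lemma twirl_mul_symmetrized s s' :
  twirl (symmetrized s *m symmetrized s') = pair_sum s s'.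
Proof.
rewrite mulmx_symmetrized twirl_sum; apply: eq_bigr => p _; rewrite twirl_sum.
transitivity (\sum_q twirl (perm_pair_op (s ^ p * s' ^ q)%g (p i0) (q (s' i0)))).
  apply: eq_bigr => q _; rewrite (twirl_perm_pair_conjg (s' ^ q)) permKV permJ.
  by rewrite conjgE mulgA mulKg.
rewrite (reindex_inj (mulgI (s'^-1)%g)); apply: eq_bigr => q _.
by rewrite conjgM (conjgE s') invgK mulgV mulg1 permM permK.
Qed.

Lemma pair_sumC s s' : pair_sum s s' = pair_sum s' s.
Proof.
have [rho s_rho rho_i0] := perm_conj_inv_fix s i0.
have [rho' s'_rho' rho'_i0] := perm_conj_inv_fix s' i0.
rewrite /pair_sum exchange_big (reindex_inj (mulgI rho')); apply: eq_bigr => q _.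
rewrite (reindex_inj (mulgI rho)); apply: eq_bigr => p _.
rewrite !conjgM s_rho s'_rho' !conjVg !permM rho_i0 rho'_i0 -invMg.
by rewrite twirl_perm_pair_invg perm_pair_opC.
Qed.

Lemma symmetrized_comm s s' :
  symmetrized s *m symmetrized s' = symmetrized s' *m symmetrized s.
Proof.
have twirlE s1 s2 : twirl (symmetrized s1 *m symmetrized s2) =
    (#|{perm 'I_n}|%:R : C) *: (symmetrized s1 *m symmetrized s2).
  rewrite scaler_nat; apply: twirl_invariant => g.
  by rewrite conj_mulmx !conj_symmetrized.
have card_neq0 : (#|{perm 'I_n}|%:R : C) != 0.
  by rewrite pnatr_eq0 -lt0n; apply/card_gt0P; exists 1%g.
apply: (scalerI card_neq0); rewrite -!twirlE.
by rewrite !twirl_mul_symmetrized pair_sumC.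
Qed.

End Twirl.

Theorem proposition2p17 (C : numClosedFieldType) (d n : nat) (hn : (1 <= n)%N)
  (O : 'M[C]_d) (hO : is_hermitian_op O) (i j : 'I_n) (hij : (i <= j)%N) :
  Ok O i *m Ok O j = Ok O j *m Ok O i.
Proof.
have first_i0 : first_factor n O = local_op O (Ordinal hn) by apply: first_factor_local.
rewrite /Ok -!scalemxAl -!scalemxAr; congr (_ *: (_ *: _)).
exact: symmetrized_comm first_i0 _ _.
Qed.
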